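(* Let $(R_\theta,p_\theta)_{\theta\in\Theta}$ be an incentive compatible menu with $\int_\Theta V_\theta(R_\theta,p_\theta)\,d\mu\ge0$. Then $(R_\theta,p_\theta)_{\theta\in\Theta}$ is individually rational if and only if $U_{\underline\theta}(R_{\underline\theta},p_{\underline\theta})\ge U_{\underline\theta}(L_{\underline\theta},0)$.
   Context: Setting (Yaari dual-utility insurance model). $(S,\Sigma,\mathbb P)$ is a probability space. Types: $\Theta=[\underline\theta,\bar\theta]$ with Borel $\sigma$-algebra and a probability measure $\mu$ with a Lebesgue density $q$. Fix $\bar L<\infty$. For each $\theta$ the type-$\theta$ agent faces a loss $L_\theta$ (bounded, $\Sigma$-measurable, values in $[0,\bar L]$) with continuous distribution function $F_\theta(l)=\mathbb P(L_\theta\le l)$. Retention functions: $\mathcal R=\{R:[0,\bar L]\to[0,\bar L]: R(0)=0,\ 0\le\partial R(l)/\partial l\le1\}$. A menu is a family $(R_\theta,p_\theta)_{\theta\in\Theta}$ with $R_\theta\in\mathcal R$, $p_\theta\in\mathbb R$. A distortion function is a nondecreasing $g:[0,1]\to[0,1]$ with $g(0)=0,g(1)=1$; type $\theta$ has distortion $g_\theta$ (with $g'_\theta$ the derivative in $t$), the insurer $g^{In}$. Utilities: $U_\theta(R,p)=-p-\int_0^{\bar L}[1-g_\theta(F_\theta(l))]\frac{\partial R(l)}{\partial l}dl$, $V_\theta(R,p)=p-\int_0^{\bar L}[1-g^{In}(F_\theta(l))](1-\frac{\partial R(l)}{\partial l})dl$, no-insurance utility $U_\theta(L_\theta,0)=-\int_0^{\bar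 L}[1-g_\theta(F_\theta(l))]dl$. Throughout, for every menu the maps $\theta\mapsto U_\theta(R_\theta,p_\theta)$, $\theta\mapsto V_\theta(R_\theta,p_\theta)$ lie in $L^1(\Theta,\mu)$. Individually rational: (P1) $U_\theta(R_\theta,p_\theta)\ge U_\theta(L_\theta,0)$ for all $\theta$ and (P2) $\int_\Theta V_\theta(R_\theta,p_\theta)d\mu\ge0$. Incentive compatible: $U_\theta(R_\theta,p_\theta)\ge U_\theta(R_{\theta'},p_{\theta'})$ for all $\theta,\theta'$. Standing assumptions: (A1) $g^{In}(t)\ge g_\theta(t)$ for all $t,\theta$. (A2) $\theta\mapsto F_\theta(l)$ differentiable, $\{F_\theta\}$ uniformly Lipschitz in $\theta$, $\partial F_\theta(l)/\partial\theta\le0$ for all $l$. (A3) each $g_\theta$ differentiable with $g'_\theta\le\delta$ for a common $\delta<\infty$; $\theta\mapsto g_\theta(t)$ differentiable, uniformly Lipschitz in $\theta$; $\partial g_\theta(t)/\partial\theta\le0$ for $t\in(0,1)$. *)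

From HB Require Import structures.
From mathcomp Require Import all_boot all_order all_algebra.
From mathcomp Require Import all_classical all_reals all_analysis.
Set Implicit Arguments. Unset Strict Implicit. Unset Printing Implicit Defensive.
Import Order.TTheory GRing.Theory Num.Theory.
Import numFieldNormedType.Exports.
Local Open Scope classical_set_scope.
Local Open Scope ring_scope.

Section Yaari.
Context {R : realType}.

Definition distr_fn {d} {S : measurableType d} (P : probability S R) (X : S -> R)
  (l : R) : R := fine (P [set s | X s <= l]).

Definition distortion (g : R -> R) : Prop :=
  g 0 = 0 /\ g 1 = 1 /\
  (forall t s, 0 <= t -> t <= s -> s <= 1 -> g t <= g s).

Definition retention (Lbar : R) (f : R -> R) : Prop :=
  f 0 = 0 /\
  (forall l, 0 <= l <= Lbar -> 0 <= f l <= Lbar) /\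
  {within `[0, Lbar], continuous f} /\
  (forall l, 0 < l < Lbar -> derivable f l 1 /\ 0 <= derive1 f l <= 1).

Definition U_util (Lbar : R) (g F : R -> R) (f : R -> R) (p : R) : R :=
  - p - Rintegral lebesgue_measure `[0, Lbar]
          (fun l => (1 - g (F l)) * derive1 f l).

Definition V_util (Lbar : R) (gIn F : R -> R) (f : R -> R) (p : R) : R :=
  p - Rintegral lebesgue_measure `[0, Lbar]
        (fun l => (1 - gIn (F l)) * (1 - derive1 f l)).

(* no-insurance utility U_theta(L_theta, 0) *)
Definition U_noins (Lbar : R) (g F : R -> R) : R :=
  - Rintegral lebesgue_measure `[0, Lbar] (fun l => 1 - g (F l)).

Definition incentive_compatible (Lbar tlo thi : R) (g F : R -> R -> R)
  (Rm : R -> R -> R) (pm : R -> R) : Prop :=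
  forall th th', tlo <= th <= thi -> tlo <= th' <= thi ->
    U_util Lbar (g th) (F th) (Rm th') (pm th') <=
    U_util Lbar (g th) (F th) (Rm th) (pm th).

Definition P1 (Lbar tlo thi : R) (g : R -> R -> R) (F : R -> R -> R)
  (Rm : R -> R -> R) (pm : R -> R) : Prop :=
  forall th, tlo <= th <= thi ->
     U_noins Lbar (g th) (F th) <= U_util Lbar (g th) (F th) (Rm th) (pm th).

Definition P2 (mu : {measure set R -> \bar R})
  (Lbar tlo thi : R) (gIn : R -> R) (F : R -> R -> R)
  (Rm : R -> R -> R) (pm : R -> R) : Prop :=
  (0 <= \int[mu]_(th in `[tlo, thi]) (V_util Lbar gIn (F th) (Rm th) (pm th))%:E)%E.

Definition individually_rational (mu : {measure set R -> \bar R})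
  (Lbar tlo thi : R) (g : R -> R -> R) (gIn : R -> R) (F : R -> R -> R)
  (Rm : R -> R -> R) (pm : R -> R) : Prop :=
  P1 Lbar tlo thi g F Rm pm /\ P2 mu Lbar tlo thi gIn F Rm pm.

End Yaari.

(* Write the gain of a contract over no insurance as
   U_th(R, p) - U_th(L_th, 0) = - p + \int_0^Lbar (1 - g_th(F_th l)) (1 - R'(l)) dl.
   Since 1 - R' >= 0, the gain of a fixed contract decreases with the distorted
   distribution function g_th o F_th, and (A2), (A3) make g_th o F_th pointwise
   nonincreasing in th.  Hence the lowest type's contract gives every type th a
   gain at least that of the lowest type, which is nonnegative by assumption,
   and incentive compatibility lets th do at least as well with its own contract. *)

From HB Require Import structures.
From mathcomp Require Import all_boot all_order all_algebra.
From mathcomp Require Import all_classical all_reals all_analysis.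
From mathcomp Require Import measurable_realfun lra.
Import Order.TTheory GRing.Theory Num.Theory.
Import numFieldNormedType.Exports.
Local Open Scope classical_set_scope.
Local Open Scope ring_scope.

Set Implicit Arguments.
Unset Strict Implicit.
Unset Printing Implicit Defensive.

Section real_lemmas.
Context {R : realType}.

Lemma lipschitz_within_continuous (A : set R) (f : R -> R) (k : R) :
  (forall x y, A x -> A y -> `|f x - f y| <= k * `|x - y|) ->
  {within A, continuous f}.
Proof.
move=> fk; apply/subspace_continuousP => x Ax; apply/cvgrPdist_lt => e e0.
have k1 : 0 < `|k| + 1 by rewrite ltr_wpDl.
rewrite near_withinE; apply/nbhs_ballP; exists (e / (`|k| + 1)).
  by rewrite /= divr_gt0.
move=> y /= xy Ay; apply: le_lt_trans (fk x y Ax Ay) _.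
apply: le_lt_trans (_ : (`|k| + 1) * `|x - y| < e).
  by rewrite ler_wpM2r // (le_trans (ler_norm k)) // lerDl.
by rewrite mulrC -ltr_pdivlMr.
Qed.

Lemma lipschitz_ler0_derive1_le_left (f : R -> R) (a b k x : R) :
  (forall t, a < t < b -> derivable f t 1) ->
  (forall t, a < t < b -> derive1 f t <= 0) ->
  (forall x y, a <= x <= b -> a <= y <= b -> `|f x - f y| <= k * `|x - y|) ->
  a <= x <= b -> f x <= f a.
Proof.
move=> df fle0 fk /[dup] xab /andP[ax xb].
apply: (ler0_derive1_le_cc _ _ _ _ _ ax).
- by move=> t; rewrite in_itv; exact: df.
- by move=> t; rewrite in_itv; exact: fle0.
- by apply: (@lipschitz_within_continuous _ _ k) => y z; rewrite /= !in_itv; exact: fk.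
- by rewrite in_itv.
- by rewrite in_itv /= lexx (le_trans ax xb).
Qed.

Lemma harmonic_cvg_dnbhs0 : @harmonic R @ \oo --> (0 : R)^'.
Proof.
move=> A /cvg_harmonic; rewrite !nbhs_simpl /=; apply: filterS => n /= H.
exact/H/lt0r_neq0/harmonic_gt0.
Qed.

Lemma derivable_harmonic_cvg (f : R -> R) (x : R) : derivable f x 1 ->
  (fun n => (harmonic n)^-1 * (f (harmonic n + x) - f x)) @ \oo --> derive1 f x.
Proof.
move=> df; rewrite derive1E.
apply: cvg_trans (cvg_comp _ _ harmonic_cvg_dnbhs0 df); apply: near_eq_cvg.
by near=> n; rewrite /= [_%:A]mulr1.
Unshelve. all: by end_near. Qed.

Lemma measurable_derive1_oo (a b : R) (f : R -> R) :
  {within `[a, b], continuous f} -> (forall x, a < x < b -> derivable f x 1) ->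
  measurable_fun `]a, b[ (derive1 f).
Proof.
move=> cf df.
have mf : measurable_fun `[a, b] f by exact: subspace_continuous_measurable_fun.
have sub_ab : `]a, b[ `<=` `[a, b] by apply: subset_itvW.
(* capping the shifted point at [b] keeps every difference quotient inside [a, b] *)
pose q n x := (harmonic n)^-1 * (f (Num.min (harmonic n + x) b) - f x).
apply: (@measurable_fun_cvg _ _ _ _ q) => [n|x].
  apply: measurable_funM => //; apply: measurable_funB; last exact: measurable_funS mf.
  apply: (measurable_comp (measurable_itv _) _ mf).
    move=> _ [y + <-]; have := @harmonic_ge0 R n.
    rewrite /= !in_itv /= le_min ge_min lexx orbT !andbT => hn /andP[ay yb].
    by rewrite (ltW (lt_trans ay yb)) andbT (le_trans (ltW ay)) // ler_wpDl.
  by apply: measurable_funTS; apply: measurable_minr => //; exact: measurable_funD.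
rewrite /= in_itv /= => /[dup] /andP[_ xb] /df/derivable_harmonic_cvg.
apply: cvg_trans; apply: near_eq_cvg.
have /cvgrPdist_lt/(_ (b - x)) := @cvg_harmonic R.
rewrite subr_gt0 => /(_ xb); apply: filterS => n /=.
rewrite sub0r normrN ger0_norm ?harmonic_ge0 // => hn.
by rewrite /q (min_idPl _) // -lerBrDr ltW.
Qed.

Lemma Rintegral_itv_cc_oo (a b : R) (h : R -> R) : measurable_fun `]a, b[ h ->
  Rintegral lebesgue_measure `[a, b] h = Rintegral lebesgue_measure `]a, b[ h.
Proof. by move=> mh; rewrite /Rintegral integral_itv_bndoo //; exact/measurable_EFinP. Qed.

Lemma integrable_itv_oo_bounded (a b M : R) (h : R -> R) :
  measurable_fun `]a, b[ h -> (forall l, a < l < b -> `|h l| <= M) ->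
  lebesgue_measure.-integrable `]a, b[ (EFin \o h).
Proof.
move=> mh hM; apply: measurable_bounded_integrable => //.
  by have /= -> := lebesgue_measure_itv `]a, b[; case: ifPn => // _; rewrite -EFinB ltry.
exists M; split; first exact: num_real.
by move=> M' MM' l; rewrite /= in_itv /= => /hM /le_trans; apply; exact: ltW.
Qed.

End real_lemmas.

Section distribution_function.
Context {R : realType} {d} {S : measurableType d} (P : probability S R) {X : S -> R}.
Hypothesis mX : measurable_fun setT X.

Let measurable_sublevel l : measurable [set s | X s <= l].
Proof. by rewrite -[X in measurable X]setTI; exact: measurable_fun_le. Qed.

Lemma distr_fn_ge0_le1 l : 0 <= distr_fn P X l <= 1.
Proof.
rewrite /distr_fn fine_ge0 ?measure_ge0 //=.
by rewrite -lee_fin fineK ?fin_num_measure ?probability_le1.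
Qed.

Lemma distr_fn_nondecreasing : {homo distr_fn P X : x y / x <= y}.
Proof.
move=> x y xy; rewrite /distr_fn fine_le ?fin_num_measure //.
by apply: le_measure; rewrite ?inE // => s /= /le_trans; apply.
Qed.

End distribution_function.

Section distortion.
Context {R : realType} (g : R -> R).
Hypothesis hg : distortion g.

Lemma distortion_ge0_le1 t : 0 <= t <= 1 -> 0 <= g t <= 1.
Proof.
case: hg => g0 [g1 gnd] /andP[t0 t1].
by rewrite -{1}g0 -g1 !gnd ?lexx.
Qed.

Lemma le_distortion_interior (h : R -> R) : distortion h ->
  (forall t, 0 < t < 1 -> h t <= g t) -> forall t, 0 <= t <= 1 -> h t <= g t.
Proof.
case: hg => g0 [g1 _] [h0 [h1 _]] hg_le t /andP[t0 t1].
have [->|tn0] := eqVneq t 0; first by rewrite g0 h0.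
have [<-|tn1] := eqVneq 1 t; first by rewrite g1 h1.
by apply: hg_le; rewrite !lt_def tn0 t0 tn1 t1.
Qed.

Lemma le_distortion (h : R -> R) (s t : R) :
  (forall u, 0 <= u <= 1 -> h u <= g u) -> 0 <= s -> s <= t -> t <= 1 -> h s <= g t.
Proof.
case: hg => _ [_ gnd] hg_le s0 st t1.
by apply: le_trans (hg_le s _) (gnd _ _ s0 st t1); rewrite s0 (le_trans st t1).
Qed.

Variables (d : measure_display) (S : measurableType d) (P : probability S R).
Variable X : S -> R.
Hypothesis mX : measurable_fun setT X.

Lemma distorted_distr_fn_ge0_le1 l : 0 <= g (distr_fn P X l) <= 1.
Proof. exact/distortion_ge0_le1/(distr_fn_ge0_le1 P mX). Qed.

Lemma measurable_distorted_distr_fn (D : set R) : measurable D ->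
  measurable_fun D (fun l => g (distr_fn P X l)).
Proof.
move=> mD; apply: nondecreasing_measurable => // x y xy.
case: hg => _ [_ gnd]; case/andP: (distr_fn_ge0_le1 P mX x) => Fx0 _.
case/andP: (distr_fn_ge0_le1 P mX y) => _ Fy1.
exact: gnd (distr_fn_nondecreasing P mX xy) _.
Qed.

End distortion.

Section insurance_gain.
Context {R : realType} (Lbar : R) (f : R -> R).
Hypothesis hf : retention Lbar f.

Let integrable01 (h : R -> R) : measurable_fun `]0, Lbar[ h ->
  (forall l, 0 < l < Lbar -> 0 <= h l <= 1) ->
  lebesgue_measure.-integrable `]0, Lbar[ (EFin \o h).
Proof.
move=> mh h01; apply: (@integrable_itv_oo_bounded _ _ _ 1) => // l /h01 /andP[h0 h1].
by rewrite ger0_norm.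
Qed.

Let measurable_derive1 : measurable_fun `]0, Lbar[ (derive1 f).
Proof. by case: hf => _ [_ [cf df]]; apply: measurable_derive1_oo cf _ => l /df[]. Qed.

Let derive1_ge0_le1 l : 0 < l < Lbar -> 0 <= derive1 f l <= 1.
Proof. by case: hf => _ [_ [_ df]] /df[]. Qed.

Lemma U_util_sub_noins (g F : R -> R) (p : R) :
  measurable_fun `]0, Lbar[ (fun l => g (F l)) ->
  (forall l, 0 < l < Lbar -> 0 <= g (F l) <= 1) ->
  U_util Lbar g F f p - U_noins Lbar g F =
  - p + Rintegral lebesgue_measure `]0, Lbar[
          (fun l => (1 - g (F l)) * (1 - derive1 f l)).
Proof.
move=> mG G01.
have mG' : measurable_fun `]0, Lbar[ (fun l => 1 - g (F l)) by exact: measurable_funB.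
have mGD : measurable_fun `]0, Lbar[ (fun l => (1 - g (F l)) * derive1 f l).
  exact: measurable_funM.
rewrite /U_util /U_noins !Rintegral_itv_cc_oo //.
under [in RHS]eq_Rintegral do rewrite mulrBr mulr1.
rewrite [in RHS]RintegralB //; [lra|apply: integrable01 => // l /G01|apply: integrable01 => // l].
- by move=> /andP[? ?]; apply/andP; split; lra.
move=> hl; have /andP[? ?] := G01 l hl; have /andP[? ?] := derive1_ge0_le1 hl.
by apply/andP; split; nra.
Qed.

Lemma le_U_util_sub_noins (g1 F1 g2 F2 : R -> R) (p : R) :
  measurable_fun `]0, Lbar[ (fun l => g1 (F1 l)) ->
  measurable_fun `]0, Lbar[ (fun l => g2 (F2 l)) ->
  (forall l, 0 < l < Lbar -> 0 <= g1 (F1 l) <= 1) ->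
  (forall l, 0 < l < Lbar -> 0 <= g2 (F2 l) <= 1) ->
  (forall l, 0 < l < Lbar -> g2 (F2 l) <= g1 (F1 l)) ->
  U_util Lbar g1 F1 f p - U_noins Lbar g1 F1 <=
  U_util Lbar g2 F2 f p - U_noins Lbar g2 F2.
Proof.
move=> mG1 mG2 G1_01 G2_01 G21.
have integrable_gain (g F : R -> R) : measurable_fun `]0, Lbar[ (fun l => g (F l)) ->
    (forall l, 0 < l < Lbar -> 0 <= g (F l) <= 1) ->
    lebesgue_measure.-integrable `]0, Lbar[
      (EFin \o (fun l => (1 - g (F l)) * (1 - derive1 f l))).
  move=> mG G01; apply: integrable01 => [|l hl].
    by apply: measurable_funM; exact: measurable_funB.
  have /andP[? ?] := G01 l hl; have /andP[? ?] := derive1_ge0_le1 hl.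
  by apply/andP; split; nra.
rewrite !U_util_sub_noins // lerD2l; apply: le_Rintegral; rewrite ?integrable_gain //.
move=> l; rewrite /= in_itv /= => hl; have /andP[_ ?] := derive1_ge0_le1 hl.
by rewrite ler_wpM2r ?subr_ge0 // lerD2l lerN2 G21.
Qed.

End insurance_gain.

Theorem proposition4
  (R : realType)
  (* probability space (S, Sigma, P) *)
  (d : measure_display) (S : measurableType d) (P : probability S R)
  (* type space Theta = [tlo, thi], type distribution mu with density q *)
  (tlo thi : R) (htlo : tlo < thi)
  (mu : probability R R) (q : R -> R)
  (hq_meas : measurable_fun setT q) (hq_ge0 : forall x, 0 <= q x)
  (hmu : forall A : set R, measurable A ->
     mu A = (\int[lebesgue_measure]_(x in A `&` `[tlo, thi]) (q x)%:E)%E)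
  (* losses L_theta with values in [0, Lbar] and continuous d.f. F_theta *)
  (Lbar : R) (L : R -> S -> R)
  (hL_meas : forall th, tlo <= th <= thi -> measurable_fun setT (L th))
  (hL_range : forall th s, tlo <= th <= thi -> 0 <= L th s <= Lbar)
  (hF_cont : forall th, tlo <= th <= thi -> continuous (distr_fn P (L th)))
  (* distortion functions *)
  (g : R -> R -> R) (gIn : R -> R)
  (hg : forall th, tlo <= th <= thi -> distortion (g th))
  (hgIn : distortion gIn)
  (* (A1) *)
  (hA1 : forall th t, tlo <= th <= thi -> 0 <= t <= 1 -> g th t <= gIn t)
  (* (A2) *)
  (hA2_diff : forall l th, tlo < th < thi ->
     derivable (fun x => distr_fn P (L x) l) th 1)
  (hA2_lip : exists K : R, forall l th th',
     tlo <= th <= thi -> tlo <= th' <= thi ->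
     `|distr_fn P (L th) l - distr_fn P (L th') l| <= K * `|th - th'|)
  (hA2_sign : forall l th, tlo < th < thi ->
     derive1 (fun x => distr_fn P (L x) l) th <= 0)
  (* (A3) *)
  (hA3_gdiff : exists delta : R, forall th t, tlo <= th <= thi -> 0 < t < 1 ->
     derivable (g th) t 1 /\ derive1 (g th) t <= delta)
  (hA3_thdiff : forall t th, 0 <= t <= 1 -> tlo < th < thi ->
     derivable (fun x => g x t) th 1)
  (hA3_lip : exists K : R, forall t th th', 0 <= t <= 1 ->
     tlo <= th <= thi -> tlo <= th' <= thi ->
     `|g th t - g th' t| <= K * `|th - th'|)
  (hA3_sign : forall t th, 0 < t < 1 -> tlo < th < thi ->
     derive1 (fun x => g x t) th <= 0)
  (* the menu (Rm theta, pm theta) *)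
  (Rm : R -> R -> R) (pm : R -> R)
  (hRm : forall th, tlo <= th <= thi -> retention Lbar (Rm th))
  (* standing integrability assumption, for this menu *)
  (hU_int : mu.-integrable `[tlo, thi]
     (fun th => (U_util Lbar (g th) (distr_fn P (L th)) (Rm th) (pm th))%:E))
  (hV_int : mu.-integrable `[tlo, thi]
     (fun th => (V_util Lbar gIn (distr_fn P (L th)) (Rm th) (pm th))%:E))
  (* hypotheses of the proposition *)
  (hIC : incentive_compatible Lbar tlo thi g (fun th => distr_fn P (L th)) Rm pm)
  (hP2 : P2 mu Lbar tlo thi gIn (fun th => distr_fn P (L th)) Rm pm) :
  individually_rational mu Lbar tlo thi g gIn (fun th => distr_fn P (L th)) Rm pm
  <->
  U_noins Lbar (g tlo) (distr_fn P (L tlo)) <=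
  U_util Lbar (g tlo) (distr_fn P (L tlo)) (Rm tlo) (pm tlo).
Proof.
have Itlo : tlo <= tlo <= thi by rewrite lexx ltW.
split => [[hP1 _]|h0]; first exact: hP1.
split => // th hth.
have F_le l : distr_fn P (L th) l <= distr_fn P (L tlo) l.
  have [k hk] := hA2_lip.
  exact: (lipschitz_ler0_derive1_le_left (hA2_diff l) (hA2_sign l) (hk l) hth).
have g_le : forall t, 0 <= t <= 1 -> g th t <= g tlo t.
  apply: (le_distortion_interior (hg _ Itlo) (hg _ hth)) => t t01.
  have t01' : 0 <= t <= 1 by case/andP: t01 => /ltW -> /ltW ->.
  have [k hk] := hA3_lip.
  exact: (lipschitz_ler0_derive1_le_left (fun s => hA3_thdiff t s t01')
    (fun s => hA3_sign t s t01) (fun x y => hk t x y t01') hth).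
have G_le l : g th (distr_fn P (L th) l) <= g tlo (distr_fn P (L tlo) l).
  case/andP: (distr_fn_ge0_le1 P (hL_meas _ hth) l) => F0 _.
  case/andP: (distr_fn_ge0_le1 P (hL_meas _ Itlo) l) => _ F1.
  exact: (le_distortion (hg _ Itlo) g_le F0 (F_le l) F1).
have gain_le := le_U_util_sub_noins (hRm _ Itlo) (pm tlo)
  (measurable_distorted_distr_fn (hg _ Itlo) P (hL_meas _ Itlo) (measurable_itv _))
  (measurable_distorted_distr_fn (hg _ hth) P (hL_meas _ hth) (measurable_itv _))
  (fun l _ => distorted_distr_fn_ge0_le1 (hg _ Itlo) P (hL_meas _ Itlo) l)
  (fun l _ => distorted_distr_fn_ge0_le1 (hg _ hth) P (hL_meas _ hth) l)
  (fun l _ => G_le l).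
rewrite -subr_ge0; apply: le_trans (le_trans _ gain_le) _; first by rewrite subr_ge0.
by rewrite lerD2r hIC.
Qed.
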